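(* Let $K\subseteq R\,\mathbb{B}_1^n$, $R\in\mathbb{N}$, be a compact convex set and let $P=\{\mathbf{x}\in\mathbb{R}^n:\mathsf{A}\mathbf{x}\le\mathbf{b}\}$, $\mathsf{A}\in\mathbb{Z}^{m\times n}$, $\mathbf{b}\in\mathbb{Z}^m$, with $P\cap K=\emptyset$ (and all rows $\mathbf{a}_i$ of $\mathsf{A}$ nonzero). For each $i\in[m]$ let $(\mathbf{a}'_i,b'_i,k_i,\mathbf{a}_{i,1},b_{i,1},\gamma_{i,1},\dots,\mathbf{a}_{i,k_i},b_{i,k_i},\gamma_{i,k_i})$ be a valid substitution sequence of $\mathbf{a}_i\mathbf{x}\le b_i$ of precision $R$, $N:=10nR$, $M:=(10nR)^{n+2}$, and let $P'=\{\mathbf{x}\in\mathbb{R}^n:\mathsf{A}'\mathbf{x}\le\mathbf{b}'\}$ where $\mathsf{A}'$ has rows $\mathbf{a}'_1,\dots,\mathbf{a}'_m$ and $\mathbf{b}'=(b'_1,\dots,b'_m)$. Then there exists an ordered list $\mathcal{L}=(\mathbf{a}_{j_1,p_1},-\mathbf{a}_{j_1,p_1},\dots,\mathbf{a}_{j_l,p_l},-\mathbf{a}_{j_l,p_l})$ with $j_r\in[m]$ and $p_r\in[k_{j_r}-1]$ for $r\in[l]$, such that $\mathrm{CG}(K\cap P',\mathcal{L})=\emptyset$ and $|\mathcal{L}|=2l\le 2(n+1)$.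
   Context: $\mathbb{B}_1^n$ is the unit $\ell_1$ ball. Notation: $\mathsf{A}\mathbf{x}\le\mathbf{b}\Rightarrow_R\mathbf{c}\mathbf{x}\le d$ means $\{\mathbf{x}:\|\mathbf{x}\|_1\le R,\ \mathsf{A}\mathbf{x}\le\mathbf{b}\}\subseteq\{\mathbf{x}:\|\mathbf{x}\|_1\le R,\ \mathbf{c}\mathbf{x}\le d\}$ (similarly with $<$; systems may include equalities). A valid substitution sequence of an inequality $\mathbf{a}\mathbf{x}\le b$ ($\mathbf{a}\in\mathbb{Z}^n\setminus\{0\}$, $b\in\mathbb{Z}$) of precision $R,N,M\in\mathbb{N}$ is a list $(\mathbf{a}',b',k,\mathbf{a}_1,b_1,\gamma_1,\dots,\mathbf{a}_k,b_k,\gamma_k)$ with $k\in[n+1]$, $\mathbf{a}',\mathbf{a}_i\in\mathbb{Z}^n$, $b',b_i\in\mathbb{Z}$, $\gamma_i\in\mathbb{R}_+$, $\gamma_k=0$, such that: (1) $\|\mathbf{a}'\|_\infty\le N^nM^{n+1}$, $|b'|\le RN^nM^{n+1}$, and $\|\mathbf{a}_i\|_\infty\le 11nN^n$, $|b_i|\le R\|\mathbf{a}_i\|_\infty+1$ for all $i\in[k]$; (2) for each $l\in[k-1]$: $\mathbf{a}'\mathbf{x}\le b',\ \mathbf{a}_i\mathbf{x}=b_i\ \forall i\in[l-1]\ \Rightarrow_R\ \mathbf{a}_l\mathbf{x}<b_l+1$; (3) for each $l\in[k]$: $\mathbf{a}'\mathbf{x}\le b',\ \mathbf{a}_i\mathbf{x}=b_i\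 \forall i\in[l-1]\ \Rightarrow_R\ \mathbf{a}\mathbf{x}\le b+\gamma_l$; (4) for each $l\in[k-1]$: $\mathbf{a}_l\mathbf{x}\le b_l-1,\ \mathbf{a}_i\mathbf{x}=b_i\ \forall i\in[l-1]\ \Rightarrow_R\ \mathbf{a}\mathbf{x}\le b-n\gamma_l$. Support function $h_K(\mathbf{a})=\sup_{\mathbf{x}\in K}\mathbf{a}\mathbf{x}$ with $h_\emptyset\equiv-\infty$; for $\mathbf{a}\in\mathbb{Z}^n$, $\mathrm{CG}(K,\mathbf{a}):=K\cap\{\mathbf{x}:\mathbf{a}\mathbf{x}\le\lfloor h_K(\mathbf{a})\rfloor\}$; for a list, cuts are applied one by one from left to right: $\mathrm{CG}(K,(\mathbf{a}_1,\dots,\mathbf{a}_k)):=\mathrm{CG}(\mathrm{CG}(K,\mathbf{a}_1),(\mathbf{a}_2,\dots,\mathbf{a}_k))$, $\mathrm{CG}(K,\emptyset)=K$. *)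

From HB Require Import structures.
From mathcomp Require Import all_boot all_order all_algebra.
From mathcomp Require Import all_classical all_reals all_analysis.
Set Implicit Arguments. Unset Strict Implicit. Unset Printing Implicit Defensive.
Import Order.TTheory GRing.Theory Num.Theory.
Import numFieldNormedType.Exports.
Local Open Scope classical_set_scope.
Local Open Scope ring_scope.

Section Defs.
Variables (R : realType) (n : nat).

Definition dotz (a : 'rV[int]_n) (x : 'rV[R]_n) : R :=
  \sum_(i < n) (a ord0 i)%:~R * x ord0 i.

Definition norm1 (x : 'rV[R]_n) : R := \sum_(i < n) `|x ord0 i|.

Definition norminfz (a : 'rV[int]_n) : int := \big[Num.max/0]_(i < n) `|a ord0 i|.

Definition impl_R (Rb : nat) (S T : 'rV[R]_n -> Prop) : Prop :=
  forall x, norm1 x <= Rb%:R -> S x -> T x.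

(* support function, valued in extended reals (h_empty = -oo) *)
Definition supp_fun (K : set 'rV[R]_n) (a : 'rV[int]_n) : \bar R :=
  ereal_sup [set (dotz a x)%:E | x in K].

(* Chvatal-Gomory closure by a single cut.  When h_K(a) = -oo, K is empty and
   the result is K = empty; when h_K(a) = +oo (never the case for the
   compact sets considered) we leave K unchanged. *)
Definition CG1 (K : set 'rV[R]_n) (a : 'rV[int]_n) : set 'rV[R]_n :=
  match supp_fun K a with
  | r%:E => K `&` [set x | dotz a x <= (Num.floor r)%:~R]
  | -oo%E => set0
  | +oo%E => K
  end.

Fixpoint CG (K : set 'rV[R]_n) (L : seq 'rV[int]_n) : set 'rV[R]_n :=
  match L with
  | [::] => K
  | a :: L' => CG (CG1 K a) L'
  end.

(* Data of a substitution sequence (a', b', k, a_1, b_1, g_1, ..., a_k, b_k, g_k);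
   k is the length of [steps]; steps are indexed from 0. *)
Record subst_seq := SubstSeq {
  ss_a' : 'rV[int]_n;
  ss_b' : int;
  ss_steps : seq ('rV[int]_n * int * R) }.

Definition ss_k (s : subst_seq) : nat := size (ss_steps s).
Definition ss_a (s : subst_seq) (i : nat) : 'rV[int]_n :=
  (nth (0, 0, 0) (ss_steps s) i).1.1.
Definition ss_b (s : subst_seq) (i : nat) : int :=
  (nth (0, 0, 0) (ss_steps s) i).1.2.
Definition ss_g (s : subst_seq) (i : nat) : R :=
  (nth (0, 0, 0) (ss_steps s) i).2.

(* hypothesis  a'x <= b', a_i x = b_i for all i < l  (0-based; paper: i in [l-1]) *)
Definition ss_hyp (s : subst_seq) (l : nat) (x : 'rV[R]_n) : Prop :=
  dotz (ss_a' s) x <= (ss_b' s)%:~R /\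
  forall i, (i < l)%N -> dotz (ss_a s i) x = (ss_b s i)%:~R.

Definition valid_subst_seq (a : 'rV[int]_n) (b : int) (Rb N M : nat)
    (s : subst_seq) : Prop :=
  let k := ss_k s in
  [/\ (1 <= k <= n.+1)%N /\ (forall i, (i < k)%N -> 0 <= ss_g s i) /\
        ss_g s k.-1 = 0,
      (* (1) *)
      (norminfz (ss_a' s) <= (N ^ n * M ^ n.+1)%N%:Z /\
       `|ss_b' s| <= (Rb * N ^ n * M ^ n.+1)%N%:Z /\
       forall i, (i < k)%N ->
         norminfz (ss_a s i) <= (11 * n * N ^ n)%N%:Z /\
         `|ss_b s i| <= Rb%:Z * norminfz (ss_a s i) + 1),
      (* (2) *)
      (forall l, (l < k.-1)%N ->
        impl_R Rb (ss_hyp s l)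
          (fun x => dotz (ss_a s l) x < (ss_b s l + 1)%:~R)),
      (* (3) *)
      (forall l, (l < k)%N ->
        impl_R Rb (ss_hyp s l)
          (fun x => dotz a x <= b%:~R + ss_g s l)) &
      (* (4) *)
      (forall l, (l < k.-1)%N ->
        impl_R Rb
          (fun x => dotz (ss_a s l) x <= (ss_b s l - 1)%:~R /\
                    forall i, (i < l)%N -> dotz (ss_a s i) x = (ss_b s i)%:~R)
          (fun x => dotz a x <= b%:~R - n%:R * ss_g s l))].

End Defs.

(* We maintain a compact convex set C inside K `&` P' (initially
   K `&` P' itself) together with a space W of linear forms constant on C.
   While C is nonempty, Helly's theorem yields a sequence j and a step
   l < k_j - 1 such that C lies on the hyperplanes a_{j,i} x = b_{j,i}
   (i < l), not all of C lies on a_{j,l} x = b_{j,l}, and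
   b_{j,l} - 1 < a_{j,l} x < b_{j,l} + 1 on C.  Indeed, otherwise condition (4)
   gives, for every j, a point of C satisfying A_j x <= b_j with margin
   n gamma_j, condition (3) bounds the violation by gamma_j on C, and the
   barycentre of any n + 1 such points lies in P; Helly would then give a
   point of P `&` K.  The pair of cuts (a_{j,l}, -a_{j,l}) then pins C to
   a_{j,l} x = b_{j,l}, so either C becomes empty or W grows by the new form
   a_{j,l}.  Since rank W <= n, at most n + 1 rounds are needed. *)

From HB Require Import structures.
From mathcomp Require Import all_boot all_order all_algebra.
From mathcomp Require Import all_classical all_reals all_analysis.
From mathcomp Require Import zify lra.
Set Implicit Arguments. Unset Strict Implicit. Unset Printing Implicit Defensive.
Import Order.TTheory GRing.Theory Num.Theory.
Import numFieldNormedType.Exports.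
Local Open Scope classical_set_scope.
Local Open Scope ring_scope.

Section Convexity.
Variables (R : numFieldType) (V : lmodType R).
Implicit Types S : set V.

Definition cvx S : Prop := forall x y (t : R),
  S x -> S y -> 0 <= t -> t <= 1 -> S (t *: x + (1 - t) *: y).

Lemma convex_setP S : convex_set S -> cvx S.
Proof.
move=> convS x y t Sx Sy t0 t1.
by have := convS x y (Itv01 t0 t1) (mem_set Sx) (mem_set Sy); rewrite inE.
Qed.

Lemma cvxI S1 S2 : cvx S1 -> cvx S2 -> cvx (S1 `&` S2).
Proof. by move=> c1 c2 x y t [? ?] [? ?] t0 t1; split; [apply: c1|apply: c2]. Qed.

Lemma cvx_comb S p (w : 'I_p -> R) (x : 'I_p -> V) : cvx S ->
  (forall i, 0 <= w i) -> \sum_i w i = 1 -> (forall i, 0 < w i -> S (x i)) ->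
  S (\sum_i w i *: x i).
Proof.
move=> convS; elim: p w x => [|p IH] w x w_ge0 w_sum1 Sx.
  by move: w_sum1; rewrite big_ord0 => /eqP; rewrite eq_sym oner_eq0.
rewrite big_ord_recl; move: w_sum1; rewrite big_ord_recl.
set t := w ord0; set s := \sum_(i < p) _ => ts1.
have s_ge0 : 0 <= s by rewrite sumr_ge0.
have [t0|t_gt0] := eqVneq t 0.
  rewrite t0 scale0r add0r; apply: IH => // [|i /Sx //].
  by rewrite -ts1 t0 add0r.
have {}t_gt0 : 0 < t by rewrite lt_neqAle eq_sym t_gt0 w_ge0.
have [s0|s_gt0] := eqVneq s 0.
  have w0 i : w (lift ord0 i) = 0 by move/psumr_eq0P: s0 => ->.
  rewrite big1 ?addr0 => [|i _]; last by rewrite w0 scale0r.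
  have t1 : t = 1 by rewrite -ts1 s0 addr0.
  by rewrite t1 scale1r; apply: Sx; rewrite -/t t1 ltr01.
have {}s_gt0 : 0 < s by rewrite lt_neqAle eq_sym s_gt0.
have sE : s = 1 - t by rewrite -ts1 addrC addKr.
have inner : S (\sum_(i < p) (w (lift ord0 i) / s) *: x (lift ord0 i)).
  apply: IH => [i|| i].
  - by rewrite divr_ge0.
  - by rewrite -mulr_suml divff // gt_eqF.
  - by rewrite pmulr_lgt0 ?invr_gt0 // => /Sx.
have := convS _ _ t (Sx _ t_gt0) inner (ltW t_gt0).
rewrite -sE -ts1 lerDl => /(_ s_ge0); congr (S (_ + _)).
rewrite scaler_sumr; apply: eq_bigr => i _.
by rewrite scalerA mulrCA divff ?mulr1 // gt_eqF.
Qed.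

End Convexity.

Section LinearForms.
Variables (R : realType) (n : nat).
Local Notation V := 'rV[R]_n.
Implicit Types (a : 'rV[int]_n) (x y : V).

Lemma dotzD a x y : dotz a (x + y) = dotz a x + dotz a y.
Proof. by rewrite /dotz -big_split; apply: eq_bigr => i _; rewrite mxE mulrDr. Qed.

Lemma dotzZ a t x : dotz a (t *: x) = t * dotz a x.
Proof. by rewrite /dotz mulr_sumr; apply: eq_bigr => i _; rewrite mxE mulrCA. Qed.

Lemma dotzN a x : dotz (- a) x = - dotz a x.
Proof. by rewrite /dotz -sumrN; apply: eq_bigr => i _; rewrite mxE mulrNz mulNr. Qed.

Lemma dotz_sum a p (w : 'I_p -> R) (x : 'I_p -> V) :
  dotz a (\sum_i w i *: x i) = \sum_i w i * dotz a (x i).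
Proof.
elim/big_rec2: _ => [|i s1 s2 _ <-]; last by rewrite dotzD dotzZ.
by rewrite -(scale0r (0 : V)) dotzZ mul0r.
Qed.

Lemma dotz_mx_diff a x y : map_mx intr a *m (x - y)^T = (dotz a x - dotz a y)%:M.
Proof.
rewrite [LHS]mx11_scalar mxE /dotz -sumrB; congr (_%:M).
by apply: eq_bigr => i _; rewrite !mxE mulrBr.
Qed.

Lemma dotz_continuous a : continuous (dotz a : V -> R).
Proof.
apply: (@continuous_big _ _ +%R 0 xpredT add_continuous) => i _ x.
change (continuous_at x ( *%R (a ord0 i)%:~R \o (fun y : V => y ord0 i))).
by apply: continuous_comp; [exact: coord_continuous|exact: mulrl_continuous].
Qed.

Lemma closed_halfspace a (beta : R) : closed [set x : V | dotz a x <= beta].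
Proof.
rewrite (_ : [set x | _] = dotz a @^-1` [set r | r <= beta]) //.
by have /continuous_closedP := (dotz_continuous (a := a)); apply; exact: closed_le.
Qed.

Lemma cvx_halfspace a (beta : R) : cvx [set x : V | dotz a x <= beta].
Proof.
move=> x y t /= ax ay t0 t1; rewrite dotzD !dotzZ.
have -> : beta = t * beta + (1 - t) * beta by rewrite mulrBl mul1r addrC subrK.
by rewrite lerD // ler_wpM2l // subr_ge0.
Qed.

Lemma closed_polyhedron (I : Type) (c : I -> 'rV[int]_n) (beta : I -> R) :
  closed [set x : V | forall i, dotz (c i) x <= beta i].
Proof.
have -> : [set x : V | forall i, dotz (c i) x <= beta i] =
          \bigcap_(i in setT) [set x | dotz (c i) x <= beta i].
  by apply/seteqP; split => x /= h i; [move=> _|]; apply: h.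
by apply: closed_bigI => i _; exact: closed_halfspace.
Qed.

Lemma cvx_polyhedron (I : Type) (c : I -> 'rV[int]_n) (beta : I -> R) :
  cvx [set x : V | forall i, dotz (c i) x <= beta i].
Proof. by move=> x y t cx cy t0 t1 i; exact: (cvx_halfspace (cx i) (cy i)). Qed.

End LinearForms.

Section Radon.
Variables (R : realFieldType) (V : lmodType R).

Lemma radon_split p (u : 'I_p -> R) (x : 'I_p -> V) :
  (exists i, u i != 0) -> \sum_i u i = 0 -> \sum_i u i *: x i = 0 ->
  exists w1 w2 : 'I_p -> R,
    [/\ forall i, 0 <= w1 i /\ 0 <= w2 i, \sum_i w1 i = 1 /\ \sum_i w2 i = 1,
        \sum_i w1 i *: x i = \sum_i w2 i *: x i &
        forall i, (0 < w1 i -> 0 < u i) /\ (0 < w2 i -> u i < 0)].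
Proof.
move=> [i0 ui0] sum_u sum_ux.
pose pos i := Num.max (u i) 0; pose neg i := Num.max (- u i) 0.
have pos_ge0 i : 0 <= pos i by rewrite le_max lexx orbT.
have neg_ge0 i : 0 <= neg i by rewrite le_max lexx orbT.
have u_split i : u i = pos i - neg i.
  rewrite /pos /neg /=; case: (leP 0 (u i)) => hu.
    by rewrite (max_idPr _) ?subr0 // oppr_le0.
  by rewrite (max_idPl _) ?sub0r ?opprK // oppr_ge0 ltW.
set sg := \sum_i pos i.
have sum_neg : \sum_i neg i = sg.
  have : \sum_i u i = sg - \sum_i neg i.
    by rewrite -sumrB; apply: eq_bigr => i _; rewrite u_split.
  by rewrite sum_u => /eqP; rewrite eq_sym subr_eq0 => /eqP <-.
have sum_negx : \sum_i neg i *: x i = \sum_i pos i *: x i.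
  have : \sum_i u i *: x i = \sum_i pos i *: x i - \sum_i neg i *: x i.
    by rewrite -sumrB; apply: eq_bigr => i _; rewrite u_split scalerBl.
  by rewrite sum_ux => /eqP; rewrite eq_sym subr_eq0 => /eqP <-.
have sg_gt0 : 0 < sg.
  rewrite lt_neqAle sumr_ge0 // andbT eq_sym; apply/negP => /eqP sg0.
  have pos0 := psumr_eq0P (fun i _ => pos_ge0 i) sg0.
  have neg0 := psumr_eq0P (fun i _ => neg_ge0 i) (etrans sum_neg sg0).
  by move: ui0; rewrite u_split pos0 // neg0 // subrr eqxx.
exists (fun i => pos i / sg), (fun i => neg i / sg); split.
- by move=> i; rewrite !divr_ge0 // ltW.
- by rewrite -!mulr_suml sum_neg divff // gt_eqF.
- have scale_out (c : 'I_p -> R) :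
      \sum_i (c i / sg) *: x i = sg^-1 *: \sum_i c i *: x i.
    by rewrite scaler_sumr; apply: eq_bigr => i _; rewrite scalerA mulrC.
  by rewrite !scale_out sum_negx.
- move=> i; rewrite !pmulr_lgt0 ?invr_gt0 // !lt_max ltxx !orbF.
  by rewrite oppr_gt0.
Qed.

End Radon.

Section Helly.
Variables (R : realFieldType) (n : nat).
Local Notation V := 'rV[R]_n.

Lemma affine_dependence p (x : 'I_p -> V) : (n.+1 < p)%N ->
  exists u : 'I_p -> R,
    [/\ exists i, u i != 0, \sum_i u i = 0 & \sum_i u i *: x i = 0].
Proof.
move=> n1_lt_p.
pose X : 'M[R]_(p, n + 1) := row_mx (\matrix_(i, j) x i ord0 j) (const_mx 1).
have : ~~ row_free X.
  apply/negP => /eqP rkX; have := rank_leq_col X; rewrite rkX addn1.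
  by rewrite leqNgt n1_lt_p.
rewrite -kermx_eq0 => /rowV0Pn [v /sub_kermxP vX /rV0Pn [i0 vi0]].
move: vX; rewrite mul_mx_row -row_mx0 => /eq_row_mx [vx v1].
exists (v ord0); split; first by exists i0.
  have := congr1 (fun A : 'M[R]_1 => A ord0 ord0) v1; rewrite /= !mxE => v1E.
  by rewrite -[RHS]v1E; apply: eq_bigr => i _; rewrite mxE mulr1.
apply/rowP => j; have := congr1 (fun A : 'M[R]_(1, n) => A ord0 j) vx.
rewrite /= !mxE => vxE; rewrite summxE -[RHS]vxE.
by apply: eq_bigr => i _; rewrite !mxE.
Qed.

Lemma radon_point p (x : 'I_p -> V) : (n.+1 < p)%N ->
  exists z : V, forall (S : set V) (r : 'I_p),
    cvx S -> (forall i, i != r -> S (x i)) -> S z.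
Proof.
move=> /(affine_dependence x) [u [nz_u sum_u sum_ux]].
have [w1 [w2 [w_ge0 [w1_sum w2_sum] w_eq w_sign]]] := radon_split nz_u sum_u sum_ux.
exists (\sum_i w1 i *: x i) => S r convS Sx.
have [ur_le0|ur_gt0] := leP (u r) 0.
  apply: cvx_comb => // [i|i w1i]; first by case: (w_ge0 i).
  apply: Sx; apply: contraTneq ur_le0 => <-; rewrite -ltNge.
  by case: (w_sign i) => /(_ w1i).
rewrite w_eq; apply: cvx_comb => // [i|i w2i]; first by case: (w_ge0 i).
apply: Sx; apply: contraTneq ur_gt0 => <-; rewrite -leNgt ltW //.
by case: (w_sign i) => _ /(_ w2i).
Qed.

Variables (I : eqType) (F : I -> set V).
Hypothesis convexF : forall j, cvx (F j).

Definition meet_upto (k : nat) : Prop := forall s : seq I, (size s <= k)%N ->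
  exists x, forall j, j \in s -> F j x.

Lemma helly_step k : (n.+1 <= k)%N -> meet_upto k -> meet_upto k.+1.
Proof.
move=> n1_le_k meet_k s; rewrite leq_eqVlt => /orP [/eqP size_s|]; last first.
  by rewrite ltnS; exact: meet_k.
case: s size_s => [//|j0 s'] size_s; set s := j0 :: s' in size_s *.
have meet_minus r : exists y, forall i : 'I_k.+1, i != r -> F (nth j0 s i) y.
  have [|y Fy] := meet_k [seq nth j0 s i | i : 'I_k.+1 in predC1 r].
    by rewrite size_image cardC1 card_ord.
  by exists y => i ir; apply: Fy; apply: map_f; rewrite mem_enum inE.
have [f Ff] := choice meet_minus.
have [z Fz] := radon_point f (n1_le_k : (n.+1 < k.+1)%N).
exists z => j js.
have r_lt : (index j s < k.+1)%N by rewrite -size_s index_mem.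
pose r := Ordinal r_lt.
have -> : j = nth j0 s r by rewrite nth_index.
by apply: (Fz _ r) => // i ir; apply: Ff; rewrite eq_sym.
Qed.

Theorem helly : meet_upto n.+1 -> forall s : seq I,
  exists x, forall j, j \in s -> F j x.
Proof.
move=> meet_n1 s; suff meet_all d : meet_upto (n.+1 + d).
  by apply: (meet_all (size s)); rewrite leq_addl.
elim: d => [|d IH]; first by rewrite addn0.
by rewrite addnS; apply: helly_step => //; rewrite leq_addr.
Qed.

End Helly.

Section ChvatalGomory.
Variables (R : realType) (n : nat).
Local Notation V := 'rV[R]_n.
Implicit Types (C : set V) (a : 'rV[int]_n).

Lemma CG1_cases C a : [\/ CG1 C a = C, CG1 C a = set0 |
  exists r : R, CG1 C a = C `&` [set x | dotz a x <= r]].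
Proof.
rewrite /CG1; case: (supp_fun C a) => [r| |]; [|by constructor 1|by constructor 2].
by constructor 3; exists (Num.floor r)%:~R.
Qed.

Lemma CG_sub C L : CG C L `<=` C.
Proof.
elim: L C => [|a L IH] C x //= /IH.
by case: (CG1_cases C a) => [->|->|[r ->] []].
Qed.

Lemma CG_compact C L : compact C -> compact (CG C L).
Proof.
elim: L C => [//|a L IH] C cC /=; apply: IH.
case: (CG1_cases C a) => [->|->|[r ->]] //; first exact: compact0.
by apply: compact_closedI => //; exact: closed_halfspace.
Qed.

Lemma CG_cvx C L : cvx C -> cvx (CG C L).
Proof.
elim: L C => [//|a L IH] C cC /=; apply: IH.
case: (CG1_cases C a) => [->|->|[r ->]] //.
by apply: cvxI => //; exact: cvx_halfspace.
Qed.

Lemma CG1_attained C a : compact C -> C !=set0 -> exists2 x0, C x0 &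
  CG1 C a = C `&` [set x | dotz a x <= (Num.floor (dotz a x0))%:~R].
Proof.
move=> cC neC.
have [x0 /set_mem Cx0 x0_max] :=
  compact_EVT_max neC cC (continuous_subspaceT (dotz_continuous (a := a))).
exists x0 => //; rewrite /CG1.
suff -> : supp_fun C a = (dotz a x0)%:E by [].
apply/eqP; rewrite eq_le; apply/andP; split; last by apply: ereal_sup_ubound; exists x0.
by apply: ge_ereal_sup => _ [x Cx <-]; rewrite lee_fin x0_max // inE.
Qed.

Lemma CG1_le C a (beta : int) y : compact C ->
  (forall x, C x -> dotz a x < (beta + 1)%:~R) -> CG1 C a y -> dotz a y <= beta%:~R.
Proof.
move=> cC a_lt C'y.
have Cy : C y by apply: (CG_sub (L := [:: a])).
have [x0 Cx0 CG1E] := CG1_attained a cC (ex_intro _ y Cy).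
move: C'y; rewrite CG1E => -[_ /= /le_trans]; apply.
by rewrite ler_int -ltzD1 floor_lt_int a_lt.
Qed.

Lemma CG_pair_eq C c (beta : int) y : compact C ->
  (forall x, C x -> (beta - 1)%:~R < dotz c x < (beta + 1)%:~R) ->
  CG C [:: c; - c] y -> dotz c y = beta%:~R.
Proof.
move=> cC c_bounds C'y.
have C1y : CG1 C c y by apply: (CG_sub (L := [:: - c])).
have c_le : dotz c y <= beta%:~R.
  by apply: (CG1_le cC _ C1y) => x /c_bounds /andP[].
have c_ge : dotz (- c) y <= (- beta)%:~R.
  apply: (CG1_le (C := CG1 C c)) C'y; first exact: (CG_compact (L := [:: c])).
  move=> x /(CG_sub (L := [:: c])) /c_bounds /andP [c_gt _].
  by rewrite dotzN ltrNl -intrN opprD opprK.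
by apply/eqP; rewrite eq_le c_le -lerN2 -dotzN -intrN.
Qed.

End ChvatalGomory.

Section Flatness.
Variables (F : fieldType) (n : nat).
Local Notation V := 'rV[F]_n.

(* C is flat along W when every row of W annihilates all differences of points
   of C, i.e. every linear form in the row space of W is constant on C. *)
Definition flat_along (W : 'M[F]_n) (C : set V) : Prop :=
  forall x y, C x -> C y -> (W <= kermx (x - y)^T)%MS.

Lemma flat_along0 (C : set V) : flat_along 0 C.
Proof. by move=> x y _ _; rewrite sub0mx. Qed.

Lemma flat_along_grow (W : 'M[F]_n) (C C' : set V) (v : V) p q :
  flat_along W C -> C' `<=` C ->
  (forall x y, C' x -> C' y -> v *m (x - y)^T = 0) ->
  C' p -> C q -> v *m (p - q)^T != 0 ->
  flat_along (W + v)%MS C' /\ (\rank W < \rank (W + v)%MS)%N.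
Proof.
move=> flatW C'C v_const C'p Cq v_pq; split.
  move=> x y C'x C'y; rewrite addsmx_sub (flatW x y (C'C _ C'x) (C'C _ C'y)) /=.
  exact/sub_kermxP/v_const.
have v_notin : ~~ (v <= W)%MS.
  apply: contra v_pq => vW; apply/eqP/sub_kermxP.
  exact: submx_trans vW (flatW _ _ (C'C _ C'p) Cq).
have : (W < W + v)%MS.
  by rewrite ltmxE addsmxSl /=; apply: contra v_notin; exact: submx_trans (addsmxSr W v).
by rewrite ltmxErank => /andP[].
Qed.

End Flatness.

Section Averaging.
Variables (R : realType) (n : nat) (I : eqType).
Local Notation V := 'rV[R]_n.
Variables (C : set V) (c : I -> 'rV[int]_n) (beta g : I -> R) (Y : I -> V).
Hypotheses (convC : cvx C) (CY : forall j, C (Y j)) (g_ge0 : forall j, 0 <= g j).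
Hypothesis slack : forall j x, C x -> dotz (c j) x <= beta j + g j.
Hypothesis deep : forall j, dotz (c j) (Y j) <= beta j - n%:R * g j.

(* If each constraint c_j x <= beta_j is violated by at most g_j on C and has
   a witness Y_j in C satisfying it with margin n g_j, then the barycentre of
   any at most n + 1 witnesses satisfies all their constraints: the deficit of
   the remaining (at most n) witnesses is compensated. *)
Lemma average_meets :
  meet_upto (fun j => C `&` [set x | dotz (c j) x <= beta j]) n.+1.
Proof.
case=> [|j0 s] size_s; first by exists 0.
set s' := j0 :: s in size_s *; set sz := size s'.
have sz_gt0 : (0 < sz)%N by [].
pose x := \sum_(r < sz) sz%:R^-1 *: Y (nth j0 s' r).
exists x => j js; split.
  apply: cvx_comb => //.
  by rewrite sumr_const card_ord -[_ *+ sz]mulr_natr mulVf // pnatr_eq0 -lt0n.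
have r0_lt : (index j s' < sz)%N by rewrite index_mem.
pose r0 := Ordinal r0_lt.
have sum_le : \sum_(r < sz) dotz (c j) (Y (nth j0 s' r)) <= sz%:R * beta j.
  rewrite (bigD1 r0) //=.
  have others : \sum_(r < sz | r != r0) dotz (c j) (Y (nth j0 s' r)) <=
                sz.-1%:R * (beta j + g j).
    apply: le_trans (ler_sum _ (fun r _ => slack j (CY _))) _.
    by rewrite sumr_const cardC1 card_ord mulr_natl.
  have witness : dotz (c j) (Y (nth j0 s' r0)) <= beta j - n%:R * g j.
    by rewrite nth_index.
  have few : sz.-1%:R * g j <= n%:R * g j.
    by rewrite ler_wpM2r // ler_nat; lia.
  have szE : sz%:R = sz.-1%:R + 1 :> R by rewrite natr1 prednK.
  rewrite szE mulrDl mul1r; move: others; rewrite mulrDr; lra.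
by rewrite /= dotz_sum -mulr_sumr mulrC ler_pdivrMr ?ltr0n // mulrC.
Qed.

End Averaging.

Section SubstitutionCuts.
Variables (R : realType) (n m Rb N M : nat) (K : set 'rV[R]_n).
Variables (A : 'I_m -> 'rV[int]_n) (b : 'I_m -> int) (S : 'I_m -> subst_seq R n).
Local Notation V := 'rV[R]_n.
Local Notation len j := (ss_k (S j)).
Hypothesis K_ball : K `<=` [set x | norm1 x <= Rb%:R].
Hypothesis PK_empty : [set x | forall i, dotz (A i) x <= (b i)%:~R] `&` K = set0.
Hypothesis S_valid : forall i, valid_subst_seq (A i) (b i) Rb N M (S i).

Let P' := [set x : V | forall i, dotz (ss_a' (S i)) x <= (ss_b' (S i))%:~R].

Definition admissible (C : set V) : Prop := [/\ compact C, cvx C & C `<=` K `&` P'].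

Definition on_hyperplanes (j : 'I_m) (l : nat) (x : V) : Prop :=
  forall i, (i < l)%N -> dotz (ss_a (S j) i) x = (ss_b (S j) i)%:~R.

Section ValidityOnC.
Variables (C : set V) (j : 'I_m) (l : nat).
Hypotheses (admC : admissible C) (l_lt : (l < len j)%N).
Hypothesis C_on : forall x, C x -> on_hyperplanes j l x.

Let in_ball x : C x -> norm1 x <= Rb%:R.
Proof. by case: admC => _ _ /[apply] -[/K_ball]. Qed.

Let hyp_on x : C x -> ss_hyp (S j) l x.
Proof. by move=> Cx; split; [case: admC => _ _ /(_ x Cx) [_ /(_ j)] | exact: C_on]. Qed.

Lemma slack_bound x : C x -> dotz (A j) x <= (b j)%:~R + ss_g (S j) l.
Proof.
by move=> Cx; case: (S_valid j) => _ _ _ /(_ l l_lt x (in_ball Cx) (hyp_on Cx)).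
Qed.

Lemma next_lt x : (l < (len j).-1)%N -> C x ->
  dotz (ss_a (S j) l) x < (ss_b (S j) l + 1)%:~R.
Proof.
by move=> l_lt' Cx; case: (S_valid j) => _ _ /(_ l l_lt' x (in_ball Cx) (hyp_on Cx)).
Qed.

Lemma deep_bound y : (l < (len j).-1)%N -> C y ->
  dotz (ss_a (S j) l) y <= (ss_b (S j) l - 1)%:~R ->
  dotz (A j) y <= (b j)%:~R - n%:R * ss_g (S j) l.
Proof.
move=> l_lt' Cy y_low; case: (S_valid j) => _ _ _ _ /(_ l l_lt' y (in_ball Cy)).
by apply; split => //; exact: C_on.
Qed.

Lemma gamma_ge0 : 0 <= ss_g (S j) l.
Proof. by case: (S_valid j) => -[_ [/(_ l l_lt)]]. Qed.

Lemma gamma_last : ~~ (l < (len j).-1)%N -> ss_g (S j) l = 0.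
Proof.
move=> l_ge; have -> : l = (len j).-1 by lia.
by case: (S_valid j) => -[_ [_ ->]].
Qed.

End ValidityOnC.

Lemma first_free_step (C : set V) j : exists l, [/\ (l < len j)%N,
  forall x, C x -> on_hyperplanes j l x &
  (l < (len j).-1)%N -> exists2 q, C q & dotz (ss_a (S j) l) q != (ss_b (S j) l)%:~R].
Proof.
have len_gt0 : (0 < len j)%N by case: (S_valid j) => -[/andP[]].
have climb l : (l <= (len j).-1)%N -> (forall x, C x -> on_hyperplanes j l x) \/
    exists l', [/\ (l' < l)%N, forall x, C x -> on_hyperplanes j l' x &
      exists2 q, C q & dotz (ss_a (S j) l') q != (ss_b (S j) l')%:~R].
  elim: l => [_|l IH /ltnW /IH [C_on|[l' [l'_lt C_on off]]]]; first by left.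
    have [all_on|] := pselect (forall x, C x ->
                               dotz (ss_a (S j) l) x = (ss_b (S j) l)%:~R).
      left => x Cx i; rewrite ltnS leq_eqVlt => /orP [/eqP ->|]; first exact: all_on.
      exact: C_on.
    move=> /existsNP [q /not_implyP [Cq /eqP q_off]].
    by right; exists l; split => //; exists q.
  by right; exists l'; split => //; rewrite ltnW.
have [C_on|[l [l_lt C_on off]]] := climb _ (leqnn _).
  by exists (len j).-1; split => //; [lia|rewrite ltnn].
by exists l; split => //; lia.
Qed.

(* Helly's theorem applied to the sets {x in C | A_j x <= b_j}: since P and K
   are disjoint, some sequence j admits a step l < k_j - 1 whose hyperplane
   a_{j,l} x = b_{j,l} contains not all of C, while C lies strictly above
   a_{j,l} x = b_{j,l} - 1. *)
Lemma cuttable_step (C : set V) : admissible C -> C !=set0 -> exists j l,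
  [/\ (l < (len j).-1)%N, forall x, C x -> on_hyperplanes j l x,
      exists2 q, C q & dotz (ss_a (S j) l) q != (ss_b (S j) l)%:~R &
      forall x, C x -> (ss_b (S j) l - 1)%:~R < dotz (ss_a (S j) l) x].
Proof.
move=> admC [x0 Cx0]; apply: contrapT => no_cut.
have [stage stageP] := choice (first_free_step C).
have deep j : exists y, C y /\
    dotz (A j) y <= (b j)%:~R - n%:R * ss_g (S j) (stage j).
  have [l_lt C_on off] := stageP j.
  have [l_lt'|l_last] := boolP (stage j < (len j).-1)%N; last first.
    have g0 := gamma_last l_lt l_last.
    exists x0; split => //; rewrite g0 mulr0 subr0.
    by have := slack_bound admC l_lt C_on Cx0; rewrite g0 addr0.
  have /existsNP [y /not_implyP [Cy]] : ~ (forall x, C x ->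
      (ss_b (S j) (stage j) - 1)%:~R < dotz (ss_a (S j) (stage j)) x).
    by move=> above; apply: no_cut; exists j, (stage j); split => //; exact: (off l_lt').
  move=> /negP; rewrite -leNgt => y_low; exists y; split => //.
  exact: (deep_bound admC C_on l_lt' Cy y_low).
have [Y HY] := choice deep.
pose F j := C `&` [set x | dotz (A j) x <= (b j)%:~R].
have convF j : cvx (F j) by apply: cvxI; [case: admC|exact: cvx_halfspace].
have meetF : meet_upto F n.+1.
  apply: (average_meets (g := fun j => ss_g (S j) (stage j)) (Y := Y)).
  - by case: admC.
  - by move=> j; case: (HY j).
  - by move=> j; have [l_lt _ _] := stageP j; exact: (gamma_ge0 l_lt).
  - by move=> j x Cx; have [l_lt C_on _] := stageP j; exact: (slack_bound admC l_lt C_on Cx).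
  - by move=> j; case: (HY j).
have [z Fz] := helly convF meetF (enum 'I_m).
suff [w [Cw Pw]] : exists w, C w /\ forall i, dotz (A i) w <= (b i)%:~R.
  have : ([set x | forall i, dotz (A i) x <= (b i)%:~R] `&` K) w.
    by split => //; case: admC => _ _ /(_ w Cw) [].
  by rewrite PK_empty.
case: (pickP (@predT 'I_m)) => [j0 _|no_index].
  by exists z; split => [|i]; [case: (Fz j0)|case: (Fz i)]; rewrite ?mem_enum.
by exists x0; split => // i; have := no_index i.
Qed.

Definition cut2 (C : set V) (c : 'rV[int]_n) : set V := CG C [:: c; - c].

(* One round of the process: the pair of cuts (a_{j,l}, -a_{j,l}) given by
   cuttable_step either empties C or pins it to the hyperplane
   a_{j,l} x = b_{j,l}, which is a direction C was not yet flat along. *)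
Lemma cut_round (C : set V) (W : 'M[R]_n) :
  admissible C -> flat_along W C -> C !=set0 ->
  exists j l, [/\ (l < (len j).-1)%N, admissible (cut2 C (ss_a (S j) l)) &
    cut2 C (ss_a (S j) l) = set0 \/ exists W' : 'M[R]_n,
      flat_along W' (cut2 C (ss_a (S j) l)) /\ (\rank W < \rank W')%N].
Proof.
move=> admC flatC neC.
have [j [l [l_lt C_on [q Cq q_off] c_gt]]] := cuttable_step admC neC.
exists j, l; set c := ss_a (S j) l in q_off c_gt *.
have [cC convC CKP] := admC.
split => //.
  by split; [exact: CG_compact|exact: CG_cvx|exact: subset_trans (CG_sub (L := [:: c; - c])) CKP].
have [->|/set0P [p C'p]] := eqVneq (cut2 C c) set0; [by left|right].
have c_eq y : cut2 C c y -> dotz c y = (ss_b (S j) l)%:~R.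
  apply: CG_pair_eq => // x Cx; rewrite c_gt //=.
  exact: (next_lt admC C_on l_lt Cx).
exists (W + map_mx intr c)%MS.
apply: (flat_along_grow flatC (CG_sub (L := [:: c; - c])) _ C'p Cq).
  by move=> x y C'x C'y; rewrite dotz_mx_diff c_eq // c_eq // subrr raddf0.
apply: contra q_off; rewrite dotz_mx_diff c_eq // => /eqP /matrixP /(_ ord0 ord0).
by rewrite !mxE /= mulr1n => /eqP; rewrite subr_eq0 eq_sym.
Qed.

Lemma cuts_exist f (C : set V) (W : 'M[R]_n) :
  admissible C -> flat_along W C -> (n - \rank W <= f)%N ->
  exists L : seq ('I_m * nat),
    [/\ all (fun jp => (jp.2 < (ss_k (S jp.1)).-1)%N) L,
        CG C (flatten [seq [:: ss_a (S jp.1) jp.2; - ss_a (S jp.1) jp.2] | jp <- L])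
          = set0 &
        (size L <= f.+1)%N].
Proof.
elim: f C W => [|f IH] C W admC flatC f_ge;
  (have [->|/set0P neC] := eqVneq C set0; first by exists [::]);
  have [j [l [l_lt admC' [C'0|[W' [flatW' rank_lt]]]]]] := cut_round admC flatC neC;
  try by exists [:: (j, l)]; split; [rewrite /= l_lt|exact: C'0|].
  by have := rank_leq_col W'; lia.
have [|L [all_L CG_L size_L]] := IH _ W' admC' flatW'.
  by have := rank_leq_col W'; lia.
by exists ((j, l) :: L); rewrite /= l_lt.
Qed.

End SubstitutionCuts.

Theorem theorem3p3 (R : realType) (n m Rb : nat)
  (K : set 'rV[R]_n) (A : 'I_m -> 'rV[int]_n) (b : 'I_m -> int)
  (S : 'I_m -> subst_seq R n) :
  compact K -> convex_set K ->
  K `<=` [set x | norm1 x <= Rb%:R] ->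
  (forall i, A i != 0) ->
  [set x | forall i, dotz (A i) x <= (b i)%:~R] `&` K = set0 ->
  (forall i, valid_subst_seq (A i) (b i) Rb (10 * n * Rb)
                             ((10 * n * Rb) ^ n.+2) (S i)) ->
  let P' := [set x | forall i, dotz (ss_a' (S i)) x <= (ss_b' (S i))%:~R] in
  exists L : seq ('I_m * nat),
    [/\ all (fun jp => (jp.2 < (ss_k (S jp.1)).-1)%N) L,
        CG (K `&` P')
           (flatten [seq [:: ss_a (S jp.1) jp.2; - ss_a (S jp.1) jp.2] | jp <- L])
          = set0 &
        (size L <= n.+1)%N].
Proof.
move=> cK convK K_ball _ PK_empty S_valid P'.
have admKP : admissible K S (K `&` P').
  split => //; last by apply: cvxI; [exact: convex_setP|exact: cvx_polyhedron].
  by apply: compact_closedI => //; exact: closed_polyhedron.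
exact: (cuts_exist K_ball PK_empty S_valid admKP (flat_along0 (C := K `&` P')) (leq_subr _ _)).
Qed.
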